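(* Let $\mathcal{U}=(u_1,\dots,u_n)$ be a complex projective 2-design consisting of $n$ unit-norm vectors in $\mathbb{C}^d$. For $1\le s\le n$, let $\xi_1,\dots,\xi_n$ be iid $\textsc{bernoulli}(s/n)$ random variables and form the random subsystem $\mathcal{U}'=(u_i:\xi_i=1)$. Let $\delta\in(0,1)$. If \[ s\ge 4\big[\sqrt d+\sqrt{\log(d/\delta)}\big]^2, \] then $\mathcal{U}'$ spans $\mathbb{C}^d$ with probability at least $1-\delta$.
   Context: A system $(u_1,\dots,u_n)$ of unit vectors in $\mathbb{C}^d$ is a complex projective 2-design if $\frac1n\sum_{i=1}^n|\langle a,u_i\rangle|^4=\mathbb{E}|\langle a,v\rangle|^4$ for every $a\in\mathbb{C}^d$, where $v$ is uniform on the complex unit sphere of $\mathbb{C}^d$; equivalently, $\frac1n\sum_{i=1}^n|\operatorname{Tr}[M u_iu_i^*]|^2=\frac{1}{d(d+1)}\big[\|M\|_F^2+(\operatorname{Tr}M)^2\big]$ for all self-adjoint $M\in\mathbb{C}^{d\times d}$. Here $\langle a,b\rangle=a^*b$. *)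

From HB Require Import structures.
From mathcomp Require Import all_boot all_order all_algebra.
From mathcomp Require Import complex.
From mathcomp Require Import reals exp.
Set Implicit Arguments. Unset Strict Implicit. Unset Printing Implicit Defensive.
Import Order.TTheory GRing.Theory Num.Theory.
Local Open Scope ring_scope.

Section Defs.
Variable R : realType.
Local Notation C := R[i].

Definition adjmx m n (A : 'M[C]_(m, n)) : 'M[C]_(n, m) := (map_mx Num.conj A)^T.

Definition selfadj d (M : 'M[C]_d) : Prop := adjmx M = M.

Definition sqnorm d (u : 'cV[C]_d) : C := (adjmx u *m u) 0 0.

Definition unit_system d n (u : 'I_n -> 'cV[C]_d) : Prop :=
  forall i, sqnorm (u i) = 1.

(* complex projective 2-design, in the (equivalent) trace form:
   (1/n) sum_i |Tr[M u_i u_i^*]|^2 = (||M||_F^2 + (Tr M)^2)/(d(d+1))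
   for all self-adjoint M. *)
Definition proj_2design d n (u : 'I_n -> 'cV[C]_d) : Prop :=
  unit_system u /\
  forall M : 'M[C]_d, selfadj M ->
    n%:R^-1 * \sum_(i < n) `|\tr (M *m (u i *m adjmx (u i)))| ^+ 2
    = (d%:R * (d%:R + 1))^-1 *
      (\sum_(j < d) \sum_(k < d) `|M j k| ^+ 2 + (\tr M) ^+ 2).

Definition spans d n (u : 'I_n -> 'cV[C]_d) (S : {set 'I_n}) : bool :=
  \rank (\matrix_(j < d, i < n) (if i \in S then u i j 0 else 0)) == d.

(* law of the random set {i : xi_i = 1} for iid Bernoulli(p) selectors *)
Definition bern_prob n (p : R) (S : {set 'I_n}) : R :=
  p ^+ #|S| * (1 - p) ^+ (n - #|S|).

Definition prob_spans d n (u : 'I_n -> 'cV[C]_d) (p : R) : R :=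
  \sum_(S : {set 'I_n} | spans u S) bern_prob p S.

End Defs.

From HB Require Import structures.
From mathcomp Require Import all_boot all_order all_algebra.
From mathcomp Require Import complex.
From mathcomp Require Import reals exp sequences.
From mathcomp Require Import ring lra.
Import Order.TTheory GRing.Theory Num.Theory.
Local Open Scope ring_scope.

(* A nonzero w is non-orthogonal to at least half of the u_i: the design identity
   for M = w^* w and M = w^* w + I gives the first two moments of the numbers
   y_i = |<w, u_i>|^2, and Cauchy-Schwarz on the support of y bounds its size from
   below by n (d + 1) / (2 d).
   Now expose the selectors one index x at a time, keeping track of the rank r of
   the space K of vectors orthogonal to the u_i selected so far, and of a lower
   bound m on the number of unexposed indices that each nonzero vector of K fails
   to be orthogonal to.  If u_x is orthogonal to K, exposing x changes nothing;
   otherwise selecting x (probability p) lowers r, and rejecting it lowers m by at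
   most one.  As (2^r - 1) (1 - p/2)^m is a supersolution of this recursion, it
   bounds the probability of not spanning; for r = d, m = n/2 and p = s/n it is at
   most exp (d - s/4) <= delta. *)

Section Subsystem.
Context {F : fieldType} {d n : nat} (v : 'I_n -> 'cV[F]_d).
Implicit Types (A S X Y : {set 'I_n}) (w : 'rV[F]_d).

Definition subsys_mx (S : {set 'I_n}) : 'M[F]_(d, n) :=
  \matrix_(j < d, i < n) (if i \in S then v i j 0 else 0).

Definition subsys_ker (S : {set 'I_n}) : 'M[F]_d := kermx (subsys_mx S).

Definition dotv (w : 'rV[F]_d) (i : 'I_n) : F := (w *m v i) 0 0.

Lemma mul_subsys_mx w S i :
  (w *m subsys_mx S) 0 i = if i \in S then dotv w i else 0.
Proof.
rewrite /dotv !mxE; case: ifP => iS; last by rewrite big1 // => j _; rewrite mxE iS mulr0.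
by apply: eq_bigr => j _; rewrite mxE iS.
Qed.

Lemma subsys_kerP w S :
  reflect {in S, forall i, dotv w i = 0} (w <= subsys_ker S)%MS.
Proof.
apply: (iffP sub_kermxP) => [wS0 i iS | wS0].
  by have /rowP/(_ i) := wS0; rewrite mul_subsys_mx iS mxE.
by apply/rowP => i; rewrite mul_subsys_mx mxE; case: ifP => // /wS0.
Qed.

Lemma subsys_ker_antitone [X Y] :
  X \subset Y -> (subsys_ker Y <= subsys_ker X)%MS.
Proof.
move=> XY; apply/row_subP => k; apply/subsys_kerP => i iX.
by have /subsys_kerP -> := row_sub k (subsys_ker Y); rewrite // (subsetP XY).
Qed.

Lemma rank_subsys_ker_setU1 [x X Y] : X \subset Y ->
  (subsys_ker X <= subsys_ker (x |: X))%MS ->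
  \rank (subsys_ker (x |: Y)) = \rank (subsys_ker Y).
Proof.
move=> XY sKX; apply/eqmx_rank/andP; split.
  exact/subsys_ker_antitone/subsetUr.
apply/row_subP => k; set w := row k _; have wY := row_sub k (subsys_ker Y).
apply/subsys_kerP => i /setU1P [->|iY]; last by move/subsys_kerP: wY; apply.
have /subsys_kerP := submx_trans (submx_trans wY (subsys_ker_antitone XY)) sKX.
by apply; rewrite setU11.
Qed.

Definition nz_count (A : {set 'I_n}) (w : 'rV[F]_d) : nat :=
  #|[set i in A | dotv w i != 0]|.

Lemma rank_subsys_ker_set0 : \rank (subsys_ker set0) = d.
Proof.
rewrite mxrank_ker (_ : subsys_mx set0 = 0) ?mxrank0 ?subn0 //.
by apply/matrixP => j i; rewrite !mxE inE.
Qed.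

Lemma nz_count_set0 w : nz_count set0 w = 0%N.
Proof. by apply/eqP; rewrite cards_eq0; apply/eqP/setP => i; rewrite !inE. Qed.

Lemma nz_count_setD1 A x w : (nz_count A w <= (nz_count (A :\ x) w).+1)%N.
Proof.
apply: (@leq_trans #|x |: [set i in A :\ x | dotv w i != 0]|).
  by apply/subset_leq_card/subsetP => i; rewrite !inE; case: (eqVneq i x).
by rewrite cardsU1 -add1n leq_add2r leq_b1.
Qed.

Lemma nz_count_setD1_eq A x w :
  dotv w x = 0 -> nz_count (A :\ x) w = nz_count A w.
Proof.
move=> wx0; apply: eq_card => i; rewrite !inE.
by case: eqP => [->|]; rewrite ?wx0 ?eqxx ?andbF.
Qed.

End Subsystem.

Section FailBound.
Context {R : realFieldType} (p : R).
Hypotheses (p_ge0 : 0 <= p) (p_le1 : p <= 1).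

Definition fail_bound (m r : nat) : R := (2 ^+ r - 1) * (1 - p / 2) ^+ m.

Lemma fail_ratio_ge0 : 0 <= 1 - p / 2.
Proof. by rewrite subr_ge0 ler_pdivrMr // mul1r (le_trans p_le1) // ler1n. Qed.

Lemma fail_bound_rank0 m : fail_bound m 0 = 0.
Proof. by rewrite /fail_bound subrr mul0r. Qed.

Lemma fail_bound0 r : (0 < r)%N -> 1 <= fail_bound 0 r.
Proof.
case: r => // r _; rewrite /fail_bound expr0 mulr1 lerBrDr exprS.
by have := exprn_ege1 r (ler1n R 2); lra.
Qed.

Lemma fail_bound_homo_r m : {homo fail_bound m : r r' / (r <= r')%N >-> r <= r'}.
Proof.
move=> r r' le_rr'; apply: ler_wpM2r; first exact/exprn_ge0/fail_ratio_ge0.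
by rewrite lerB ?ler_eXn2l // ltr1n.
Qed.

Lemma fail_bound_step m r : (0 < r)%N ->
  p * fail_bound m r.-1 + (1 - p) * fail_bound m.-1 r <= fail_bound m r.
Proof.
case: r => // r _; rewrite /fail_bound /= exprS.
have a_ge1 := exprn_ege1 r (ler1n R 2).
move: (2 ^+ r) a_ge1 => a a_ge1.
case: m => [|m] /=.
  by rewrite !expr0 !mulr1; have := mulr_ge0 p_ge0 (le_trans ler01 a_ge1); nra.
have key : p * (a - 1) * (1 - p / 2) + (1 - p) * (2 * a - 1) <= (2 * a - 1) * (1 - p / 2).
  rewrite -subr_ge0 (_ : _ - _ = p / 2 * (1 + p * (a - 1))); last by field.
  by rewrite mulr_ge0 ?divr_ge0 ?addr_ge0 ?mulr_ge0 ?subr_ge0.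
rewrite exprS; have := ler_wpM2r (exprn_ge0 m fail_ratio_ge0) key; lra.
Qed.

End FailBound.

Lemma spans_rank_ker (R : realType) d n (u : 'I_n -> 'cV[R[i]]_d) S :
  spans u S = (\rank (subsys_ker u S) == 0)%N.
Proof. by rewrite mxrank_eq0 kermx_eq0. Qed.

Section Selection.
Context {R : realType} {d n : nat} (u : 'I_n -> 'cV[R[i]]_d) (p : R).
Implicit Types (A S X : {set 'I_n}).

Definition sel_weight A S : R := \prod_(i in A) (if i \in S then p else 1 - p).

Definition succ_prob A X : R :=
  \sum_(S : {set 'I_n} | S \subset A) sel_weight A S * (spans u (X :|: S))%:R.

Lemma succ_prob_set0 X : succ_prob set0 X = (spans u X)%:R.
Proof.
rewrite /succ_prob (eq_bigl (pred1 set0)) => [|S]; last by rewrite subset0.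
by rewrite big_pred1_eq /sel_weight big_set0 mul1r setU0.
Qed.

Lemma sel_weight_setD1 [A S x] : x \in A -> x \notin S ->
  sel_weight A S = (1 - p) * sel_weight (A :\ x) S.
Proof.
move=> xA xS; rewrite /sel_weight (bigD1 x) //= (negbTE xS); congr (_ * _).
by apply: eq_bigl => i; rewrite in_setD1 andbC.
Qed.

Lemma sel_weight_setU1 [A S x] : x \in A -> x \notin S ->
  sel_weight A (x |: S) = p * sel_weight (A :\ x) S.
Proof.
move=> xA xS; rewrite /sel_weight (bigD1 x) //= setU11; congr (_ * _).
apply: eq_big => i; first by rewrite in_setD1 andbC.
by move=> /andP[_ ix]; rewrite in_setU1 (negbTE ix).
Qed.

Lemma succ_prob_setD1 A X x : x \in A ->
  succ_prob A X = (1 - p) * succ_prob (A :\ x) X + p * succ_prob (A :\ x) (x |: X).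
Proof.
move=> xA; rewrite /succ_prob (bigID (fun S => x \in S)) /= addrC !mulr_sumr.
congr (_ + _).
  apply: eq_big => S; first by rewrite subsetD1.
  by move=> /andP[_ xS]; rewrite (sel_weight_setD1 xA xS) mulrA.
rewrite (reindex_onto (fun S => x |: S) (fun S => S :\ x)) /=; last first.
  by move=> S /andP[_ xS]; rewrite setD1K.
apply: eq_big => S.
  rewrite setU11 andbT subsetD1 subUset sub1set xA /=.
  apply/andP/andP => [[sA /eqP eS] | [sA xS]]; last by rewrite setU1K.
  by split; rewrite // -eS setD11.
move=> /andP[_ /eqP eS]; have xS : x \notin S by rewrite -eS setD11.
by rewrite (sel_weight_setU1 xA xS) setUA (setUC X) mulrA.
Qed.

Lemma succ_prob_setU1_stable A X x :
  (subsys_ker u X <= subsys_ker u (x |: X))%MS ->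
  succ_prob A (x |: X) = succ_prob A X.
Proof.
move=> sKX; apply: eq_bigr => S _.
by rewrite !spans_rank_ker -setUA (rank_subsys_ker_setU1 u (subsetUl X S) sKX).
Qed.

Lemma succ_prob_setT : succ_prob setT set0 = prob_spans u p.
Proof.
rewrite /succ_prob /prob_spans [RHS]big_mkcond; apply: eq_big => [S|S _].
  by rewrite subsetT.
rewrite set0U; case: (spans u S); rewrite ?mulr1 ?mulr0 //.
rewrite /sel_weight /bern_prob (bigID (mem S)) /=.
rewrite (eq_bigr (fun _ => p)) => [|i /andP[_ ->]] //.
rewrite [X in _ * X](eq_bigr (fun _ => 1 - p)) => [|i /andP[_ /negbTE ->]] //.
rewrite !prodr_const -[n in (n - _)%N]card_ord -(cardsC S) addKn.
by congr (_ ^+ _ * _ ^+ _); apply: eq_card => i; rewrite unfold_in /= !inE.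
Qed.

Hypotheses (p_ge0 : 0 <= p) (p_le1 : p <= 1).

Definition covers A X m := forall w : 'rV_d,
  w != 0 -> (w <= subsys_ker u X)%MS -> (m <= nz_count u A w)%N.

Lemma succ_prob_bound_set0 X m : covers set0 X m ->
  1 - succ_prob set0 X <= fail_bound p m (\rank (subsys_ker u X)).
Proof.
move=> cover; rewrite succ_prob_set0 spans_rank_ker.
have [->|r_gt0] := posnP (\rank (subsys_ker u X)).
  by rewrite fail_bound_rank0 subrr.
have -> : m = 0%N.
  apply/eqP; rewrite -leqn0 -(nz_count_set0 u (nz_row (subsys_ker u X))).
  by apply: cover (nz_row_sub _); rewrite nz_row_eq0 -mxrank_eq0 -lt0n.
by rewrite subr0 fail_bound0.
Qed.

Lemma succ_prob_bound [A X m] : covers A X m ->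
  1 - succ_prob A X <= fail_bound p m (\rank (subsys_ker u X)).
Proof.
have [k] := ubnP #|A|; elim: k => // k IH in A X m *; rewrite ltnS => cardA.
have [->|[x xA] cover] := set_0Vmem A; first exact: succ_prob_bound_set0.
have cardAx : (#|A :\ x| < k)%N by move: cardA; rewrite (cardsD1 x) xA add1n.
have KxX : (subsys_ker u (x |: X) <= subsys_ker u X)%MS.
  exact/subsys_ker_antitone/subsetUr.
rewrite (succ_prob_setD1 _ _ _ xA).
have [KX_Kx | KX_nKx] := boolP (subsys_ker u X <= subsys_ker u (x |: X))%MS.
  have xK w : (w <= subsys_ker u X)%MS -> dotv u w x = 0.
    by move=> /submx_trans/(_ KX_Kx)/subsys_kerP; apply; rewrite setU11.
  rewrite succ_prob_setU1_stable // -mulrDl subrK mul1r.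
  apply: IH cardAx _ => w w0 wK; rewrite nz_count_setD1_eq ?xK //; exact: cover.
set r := \rank (subsys_ker u X).
have r'_lt_r : (\rank (subsys_ker u (x |: X)) < r)%N.
  by apply: rank_ltmx; rewrite ltmxE KX_nKx KxX.
have r_gt0 : (0 < r)%N by apply: leq_ltn_trans r'_lt_r.
have fail_in : 1 - succ_prob (A :\ x) (x |: X) <= fail_bound p m r.-1.
  have r'_le : (\rank (subsys_ker u (x |: X)) <= r.-1)%N by rewrite -ltnS prednK.
  apply: le_trans _ (fail_bound_homo_r _ p_le1 m _ _ r'_le).
  apply: IH cardAx _ => w w0 /[dup] wK /subsys_kerP wx.
  rewrite nz_count_setD1_eq ?wx ?setU11 //; apply: cover w0 (submx_trans wK KxX).
have fail_out : 1 - succ_prob (A :\ x) X <= fail_bound p m.-1 r.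
  apply: IH cardAx _ => w w0 wK; rewrite -subn1 leq_subLR add1n.
  exact: leq_trans (cover w w0 wK) (nz_count_setD1 _ _ _ _).
have one_sub_p_ge0 : 0 <= 1 - p by rewrite subr_ge0.
have := fail_bound_step _ p_ge0 p_le1 m r r_gt0.
have := ler_wpM2l p_ge0 fail_in; have := ler_wpM2l one_sub_p_ge0 fail_out.
lra.
Qed.

End Selection.

Section Support.
Context {F : realFieldType}.

Lemma sqr_sum_le_support (I : finType) (y : I -> F) :
  (\sum_i y i) ^+ 2 <= #|[set i | y i != 0]|%:R * \sum_i y i ^+ 2.
Proof.
set T := [set i | y i != 0].
have sum_onT (G : F -> F) : G 0 = 0 -> \sum_i G (y i) = \sum_(i in T) G (y i).
  move=> G0; rewrite [LHS](bigID (mem T)) /= [X in _ + X]big1 ?addr0 // => i.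
  by rewrite inE negbK => /eqP ->.
rewrite (sum_onT id) // (sum_onT (fun x => x ^+ 2)) ?expr0n //= expr2 big_distrlr /=.
have amgm i j : 2 * (y i * y j) <= y i ^+ 2 + y j ^+ 2.
  by have := sqr_ge0 (y i - y j); lra.
have double_sum : \sum_(i in T) \sum_(j in T) (y i ^+ 2 + y j ^+ 2)
    = 2 * (#|T|%:R * \sum_(i in T) y i ^+ 2).
  under eq_bigr do rewrite big_split /= sumr_const.
  by rewrite big_split /= sumr_const sumrMnl !mulr_natl mulr2n.
rewrite -(ler_pM2l (_ : 0 < 2)) // -double_sum mulr_sumr.
by apply: ler_sum => i _; rewrite mulr_sumr; apply: ler_sum => j _.
Qed.

Lemma moments_support (n : nat) (D N : F) (y : 'I_n -> F) : 0 < D -> 0 < N ->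
  (\sum_i y i) * D = n%:R * N ->
  (\sum_i y i ^+ 2) * (D * (D + 1)) = 2 * n%:R * N ^+ 2 ->
  (n <= #|[set i | y i != 0%R]|.*2)%N.
Proof.
move=> D_gt0 N_gt0 moment1 moment2; set K := #|_|.
have [->|n_gt0] := posnP n; first by [].
suff : (n%:R * N) ^+ 2 * (D + 1) <= K%:R * D * (2 * n%:R * N ^+ 2).
  rewrite (_ : _ * (D + 1) = (n%:R * N ^+ 2) * (n%:R * (D + 1))); last by ring.
  rewrite (_ : K%:R * D * _ = (n%:R * N ^+ 2) * (2 * K%:R * D)); last by ring.
  rewrite ler_pM2l ?mulr_gt0 ?exprn_gt0 ?ltr0n // => le_nD.
  rewrite -(ler_nat F) -mul2n natrM -(ler_pM2r D_gt0).
  by apply: le_trans le_nD; rewrite mulrDr mulr1 lerDl ler0n.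
rewrite -moment1 -moment2 -/K.
rewrite (_ : _ * (D + 1) = (\sum_i y i) ^+ 2 * (D ^+ 2 * (D + 1))); last by ring.
rewrite (_ : K%:R * D * _ = K%:R * (\sum_i y i ^+ 2) * (D ^+ 2 * (D + 1))); last by ring.
apply: ler_wpM2r (sqr_sum_le_support _ y).
by rewrite mulr_ge0 ?exprn_ge0 ?addr_ge0 // ltW.
Qed.

Lemma moments_polarization (n : nat) (D N : F) (y : 'I_n -> F) :
  (0 < n)%N -> 0 < D ->
  n%:R^-1 * \sum_i y i ^+ 2 = (D * (D + 1))^-1 * (N ^+ 2 + N ^+ 2) ->
  n%:R^-1 * \sum_i (y i + 1) ^+ 2
    = (D * (D + 1))^-1 * (N ^+ 2 + 2 * N + D + (N + D) ^+ 2) ->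
  (\sum_i y i) * D = n%:R * N /\
  (\sum_i y i ^+ 2) * (D * (D + 1)) = 2 * n%:R * N ^+ 2.
Proof.
move=> n_gt0 D_gt0 quad quad1.
have n_neq0 : n%:R != 0 :> F by rewrite pnatr_eq0 -lt0n.
have D1_neq0 : D + 1 != 0 by rewrite gt_eqF ?addr_gt0.
have expand : \sum_i (y i + 1) ^+ 2 = \sum_i y i ^+ 2 + 2 * \sum_i y i + n%:R.
  rewrite (eq_bigr (fun i => y i ^+ 2 + 2 * y i + 1)) => [|i _]; last by ring.
  by rewrite 2!big_split -mulr_sumr sumr_const card_ord.
have sum2E := canRL (mulVKf n_neq0) quad.
have sum1E : \sum_i y i = ((n%:R * (D * (D + 1))^-1) *
    (N ^+ 2 + 2 * N + D + (N + D) ^+ 2) - \sum_i y i ^+ 2 - n%:R) / 2.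
  by rewrite -mulrA -quad1 mulVKf // expand; field.
by split; rewrite ?sum1E sum2E; field; rewrite D1_neq0 gt_eqF.
Qed.

End Support.

Section Design.
Context {R : realType}.
Local Notation C := R[i].

Lemma adjmxE m k (A : 'M[C]_(m, k)) i j : adjmx A i j = (A j i)^*.
Proof. by rewrite !mxE. Qed.

Lemma adjmxM m k l (A : 'M[C]_(m, k)) (B : 'M[C]_(k, l)) :
  adjmx (A *m B) = adjmx B *m adjmx A.
Proof. by rewrite /adjmx map_mxM trmx_mul. Qed.

Context {d : nat}.
Implicit Types (w : 'rV[C]_d) (v : 'cV[C]_d).

Lemma selfadjD (A B : 'M[C]_d) : selfadj A -> selfadj B -> selfadj (A + B).
Proof.
move=> hA hB; apply/matrixP => j k; rewrite adjmxE !mxE rmorphD /=.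
by rewrite -!adjmxE hA hB.
Qed.

Lemma selfadj1 : selfadj (1%:M : 'M[C]_d).
Proof. by apply/matrixP => j k; rewrite adjmxE !mxE eq_sym conjC_nat. Qed.


Definition gram w : 'M[C]_d := adjmx w *m w.

Lemma gramE w j k : gram w j k = (w 0 j)^* * w 0 k.
Proof. by rewrite mxE big_ord1 adjmxE. Qed.

Lemma selfadj_gram w : selfadj (gram w).
Proof. by apply/matrixP => j k; rewrite adjmxE !gramE rmorphM /= conjCK mulrC. Qed.

Lemma mxtrace_gram_proj w v :
  \tr (gram w *m (v *m adjmx v)) = `|(w *m v) 0 0| ^+ 2.
Proof.
rewrite mulmxA mxtrace_mulC /gram !mulmxA -mulmxA -adjmxM.
by rewrite /mxtrace big_ord1 mxE big_ord1 adjmxE normCKC.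
Qed.

Lemma mxtrace_gram_proj1 w v :
  \tr ((gram w + 1%:M) *m (v *m adjmx v)) = `|(w *m v) 0 0| ^+ 2 + sqnorm v.
Proof.
rewrite mulmxDl mxtraceD mxtrace_gram_proj mul1mx mxtrace_mulC.
by rewrite /mxtrace big_ord1.
Qed.

Lemma mxtrace_gram w : \tr (gram w) = \sum_j `|w 0 j| ^+ 2.
Proof. by apply: eq_bigr => j _; rewrite gramE normCKC. Qed.

Lemma frob_gram w : \sum_j \sum_k `|gram w j k| ^+ 2 = \tr (gram w) ^+ 2.
Proof.
rewrite mxtrace_gram expr2 mulr_suml; apply: eq_bigr => j _; rewrite mulr_sumr.
by apply: eq_bigr => k _; rewrite gramE normrM norm_conjC exprMn.
Qed.

Lemma frob_gram1 w :
  \sum_j \sum_k `|(gram w + 1%:M) j k| ^+ 2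
  = \sum_j \sum_k `|gram w j k| ^+ 2 + 2 * \tr (gram w) + d%:R.
Proof.
have row j : \sum_k `|(gram w + 1%:M) j k| ^+ 2
    = \sum_k `|gram w j k| ^+ 2 + (2 * gram w j j + 1).
  have entryE k : (gram w + 1%:M) j k = gram w j k + (j == k)%:R.
    by rewrite [LHS]mxE [1%:M j k]mxE.
  have a_ge0 : 0 <= gram w j j by rewrite gramE -normCKC exprn_ge0.
  rewrite (bigD1 j) // [in RHS](bigD1 j) //= entryE eqxx mulr1n.
  rewrite (ger0_norm a_ge0) ger0_norm ?addr_ge0 //.
  rewrite (eq_bigr (fun k => `|gram w j k| ^+ 2)) => [|k kj]; first by ring.
  by rewrite entryE eq_sym (negbTE kj) addr0.
rewrite (eq_bigr _ (fun j _ => row j)) !big_split /= -mulr_sumr sumr_const.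
by rewrite card_ord addrA.
Qed.

Definition sqmod (z : C) : R := complex.Re z ^+ 2 + complex.Im z ^+ 2.

Lemma sqmodE z : (sqmod z)%:C%C = `|z| ^+ 2.
Proof. exact: add_Re2_Im2. Qed.

Lemma sqmod_ge0 z : 0 <= sqmod z.
Proof. exact: addr_ge0 (sqr_ge0 _) (sqr_ge0 _). Qed.

Lemma sqmod_eq0 z : (sqmod z == 0) = (z == 0).
Proof. by rewrite -(inj_eq (@complexI R)) sqmodE rmorph0 sqrf_eq0 normr_eq0. Qed.

Lemma proj_2design_moments n (u : 'I_n -> 'cV[C]_d) w :
  proj_2design u -> (0 < n)%N -> (0 < d)%N ->
  let y i := sqmod ((w *m u i) 0 0) in let N := \sum_j sqmod (w 0 j) in
  (\sum_i y i) * d%:R = n%:R * N /\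
  (\sum_i y i ^+ 2) * (d%:R * (d%:R + 1)) = 2 * n%:R * N ^+ 2.
Proof.
case=> unit design n_gt0 d_gt0 y N.
have NE : N%:C%C = \tr (gram w).
  by rewrite rmorph_sum mxtrace_gram; apply: eq_bigr => j _; apply: sqmodE.
have y_ge0 i : 0 <= `|(w *m u i) 0 0| ^+ 2 by apply: exprn_ge0.
have := design _ (selfadj_gram w); rewrite frob_gram.
under eq_bigr do rewrite mxtrace_gram_proj ger0_norm // -sqmodE.
rewrite -NE => quadC.
have := design _ (selfadjD _ _ (selfadj_gram w) selfadj1).
rewrite frob_gram1 frob_gram mxtraceD mxtrace_scalar.
under eq_bigr do rewrite mxtrace_gram_proj1 unit ger0_norm ?addr_ge0 // -sqmodE.
rewrite -NE => quad1C.
have quad : n%:R^-1 * \sum_i y i ^+ 2 = (d%:R * (d%:R + 1))^-1 * (N ^+ 2 + N ^+ 2).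
  apply: (@complexI R); rewrite rmorphM fmorphV rmorph_nat rmorph_sum.
  under eq_bigr do rewrite rmorphXn.
  by rewrite quadC !(rmorphXn, rmorphM, rmorphD, rmorph_nat, fmorphV).
have quad1 : n%:R^-1 * \sum_i (y i + 1) ^+ 2
    = (d%:R * (d%:R + 1))^-1 * (N ^+ 2 + 2 * N + d%:R + (N + d%:R) ^+ 2).
  apply: (@complexI R); rewrite rmorphM fmorphV rmorph_nat rmorph_sum.
  under eq_bigr do rewrite rmorphXn rmorphD rmorph1.
  by rewrite quad1C !(rmorphXn, rmorphM, rmorphD, rmorph_nat, fmorphV).
by apply: moments_polarization quad quad1; rewrite ?ltr0n.
Qed.

End Design.

Lemma proj_2design_support (R : realType) d n (u : 'I_n -> 'cV[R[i]]_d) w :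
  proj_2design u -> w != 0 -> (n <= (nz_count u setT w).*2)%N.
Proof.
move=> design w_neq0; have [n_gt0|n_le0] := ltnP 0 n; last exact: leq_trans n_le0 _.
have d_gt0 : (0 < d)%N.
  rewrite lt0n; apply: contra w_neq0 => /eqP d0.
  by apply/eqP/rowP => -[j lt_jd]; exfalso; move: lt_jd; rewrite d0.
have [moment1 moment2] := proj_2design_moments _ _ w design n_gt0 d_gt0.
have N_gt0 : 0 < \sum_j sqmod (w 0 j).
  rewrite lt_def sumr_ge0 ?andbT => [|j _]; last exact: sqmod_ge0.
  apply: contra w_neq0 => /eqP /psumr_eq0P sum0; apply/eqP/rowP => j.
  by apply/eqP; rewrite mxE -sqmod_eq0 sum0 // => k _; exact: sqmod_ge0.
rewrite (_ : nz_count u setT w = #|[set i | sqmod ((w *m u i) 0 0) != 0]|).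
  by apply: moments_support N_gt0 moment1 moment2; rewrite ltr0n.
by apply: eq_card => i; rewrite !inE sqmod_eq0.
Qed.

Lemma fail_bound_le_expR {R : realType} (p : R) m r : 0 <= p -> p <= 1 ->
  fail_bound p m r <= expR (r%:R - p / 2 * m%:R).
Proof.
move=> p_ge0 p_le1; have q_ge0 := fail_ratio_ge0 _ p_le1.
rewrite expRD -[r%:R]mulr1 expRM_natl -mulNr (mulrC (- (p / 2))) expRM_natl /fail_bound.
apply: ler_pM; first by rewrite subr_ge0 exprn_ege1 // ler1n.
- exact: exprn_ge0.
- apply: (@le_trans _ _ (2 ^+ r)); first by rewrite gerBl.
  apply: lerXn2r; rewrite ?nnegrE ?expR_ge0 //.
  by have := expR_ge1Dx (1 : R); rewrite (_ : 1 + 1 = 2 :> R).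
- by apply: lerXn2r; rewrite ?nnegrE ?expR_ge0 ?expR_ge1Dx.
Qed.

Lemma fail_bound_le_delta {R : realType} {d n s : nat} {delta : R} :
  (1 <= s)%N -> (s <= n)%N -> 0 < delta -> delta < 1 ->
  4 * (Num.sqrt (d%:R : R) + Num.sqrt (ln (d%:R / delta))) ^+ 2 <= s%:R ->
  fail_bound (s%:R / n%:R) (uphalf n) d <= delta.
Proof.
move=> s_ge1 s_le_n delta_gt0 delta_lt1 s_large.
have [->|d_gt0] := posnP d; first by rewrite fail_bound_rank0 ltW.
have n_gt0 : 0 < n%:R :> R by rewrite ltr0n (leq_trans s_ge1).
have d_ge1 : 1 <= d%:R :> R by rewrite ler1n.
set p := s%:R / n%:R; set L := ln (d%:R / delta).
have L_ge0 : 0 <= L.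
  by rewrite ln_ge0 // ler_pdivlMr // mul1r (le_trans (ltW delta_lt1)).
have dL_le : d%:R + L <= s%:R / 4.
  have := mulr_ge0 (sqrtr_ge0 (d%:R : R)) (sqrtr_ge0 L).
  have := sqr_sqrtr (ler0n R d); have := sqr_sqrtr L_ge0.
  rewrite -/L in s_large; move: s_large.
  set a := Num.sqrt _; set b := Num.sqrt _; nra.
have s_le : s%:R / 4 <= p / 2 * (uphalf n)%:R.
  have le_n_2m : n%:R <= 2 * (uphalf n)%:R :> R.
    by rewrite -natrM ler_nat mul2n uphalfK leq_addl.
  rewrite (_ : p / 2 * _ = s%:R / 4 + s%:R * (2 * (uphalf n)%:R - n%:R) / (4 * n%:R)).
    by rewrite lerDl divr_ge0 ?mulr_ge0 ?subr_ge0 // ltW.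
  by rewrite /p; field; rewrite gt_eqF.
have p_ge0 : 0 <= p by rewrite divr_ge0.
have p_le1 : p <= 1 by rewrite ler_pdivrMr // mul1r ler_nat.
apply: le_trans (fail_bound_le_expR _ _ _ p_ge0 p_le1) _.
apply: (@le_trans _ _ (expR (- L))); first by rewrite ler_expR; lra.
have d_gt0' : 0 < d%:R :> R by rewrite ltr0n.
rewrite expRN lnK ?posrE ?divr_gt0 // invf_div ler_pdivrMr //.
by rewrite ler_peMr // ltW.
Qed.

Theorem theorem4p2 (R : realType) (d n s : nat) (u : 'I_n -> 'cV[R[i]]_d)
    (delta : R) :
  proj_2design u ->
  (1 <= s)%N -> (s <= n)%N ->
  0 < delta -> delta < 1 ->
  4 * (Num.sqrt (d%:R : R) + Num.sqrt (ln (d%:R / delta))) ^+ 2 <= s%:R ->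
  1 - delta <= prob_spans u (s%:R / n%:R).
Proof.
move=> design s_ge1 s_le_n delta_gt0 delta_lt1 s_large.
have n_gt0 : 0 < n%:R :> R by rewrite ltr0n (leq_trans s_ge1).
have p_ge0 : 0 <= s%:R / n%:R :> R by rewrite divr_ge0.
have p_le1 : s%:R / n%:R <= 1 :> R by rewrite ler_pdivrMr // mul1r ler_nat.
have cover : covers u setT set0 (uphalf n).
  by move=> w w_neq0 _; rewrite leq_uphalf_double proj_2design_support.
have := succ_prob_bound u _ p_ge0 p_le1 cover.
rewrite succ_prob_setT rank_subsys_ker_set0.
have := fail_bound_le_delta s_ge1 s_le_n delta_gt0 delta_lt1 s_large.
lra.
Qed.
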